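(* For every positive integer $n$, any deterministic finite automaton separating $\mathrm{EvenCycles}_{n,2}$ from $\mathrm{OddCycles}_{n,2}$ has at least $n+1$ states.
   Context: Let $\Sigma=[n]\times[d]$ where $[m]=\{1,\dots,m\}$. A deterministic finite automaton over $\Sigma$ consists of a finite set $Q$ of states, an initial state $q_{start}\in Q$ and a transition function $\delta\colon Q\times\Sigma\to Q$, extended to words in the usual way. For disjoint $A,B\subseteq\Sigma^{\mathbb N}$, the automaton separates $A$ from $B$ if there is a state $q_{accept}$ such that for every infinite word $w=w_1w_2\ldots\in\Sigma^{\mathbb N}$: if $w\in A$ then there is $i_0$ with $\delta(q_{start},w_1\ldots w_i)=q_{accept}$ for all $i\ge i_0$; if $w\in B$ then $\delta(q_{start},w_1\ldots w_i)\neq q_{accept}$ for all $i\ge 1$. A game graph with $n$ nodes and $d$ priorities is a pair $G=\langle E,\pi\rangle$ where $E\subseteq[n]^2$ is a set of directed edges (loops allowed, no parallel edges) such that every node $u\in[n]$ has at least one outgoing edge, and $\pi\colon E\to[d]$. $G$ is even (resp. odd) if for every $k\ge1$ and every $v_1,\dots,v_k$ with $(v_1,v_2),\dots,(v_{k-1},v_k),(v_k,v_1)\in E$, the maximum of $\pi$ over these $k$ edges is even (resp. odd). $\mathrm{EvenCycles}_{n,d}$ (resp. $\mathrm{OddCycles}_{n,d}$) is the set of infinite words $(v_1,l_1)(v_2,l_2)\ldots\in\Sigma^{\mathbb N}$ for which there exists an even (resp. odd) game graph $G=\langle E,\pi\rangle$ with at most $n$ nodes and $d$ priorities such that $(v_i,v_{i+1})\in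 E$ and $\pi((v_i,v_{i+1}))=l_i$ for all $i\ge1$. *)

From mathcomp Require Import all_boot.
Set Implicit Arguments. Unset Strict Implicit. Unset Printing Implicit Defensive.

(* Nodes [n] are represented by 'I_n (node v+1 <-> ordinal v);
   priorities [d] = {1..d} are represented by 'I_d, where the ordinal l
   stands for the priority l+1 (see [prio]). *)
Definition Sigma (n d : nat) : finType := ('I_n * 'I_d)%type.

Definition prio (d : nat) (l : 'I_d) : nat := (val l).+1.

(* Run of a DFA: [run delta q0 w i] = delta(q0, w_1 ... w_i), where the
   infinite word w_1 w_2 ... is [w 0, w 1, ...]. *)
Fixpoint run (Q A : Type) (delta : Q -> A -> Q) (q0 : Q) (w : nat -> A)
  (i : nat) : Q :=
  match i with
  | 0 => q0
  | i'.+1 => delta (run delta q0 w i') (w i')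
  end.

Definition separates (Q A : Type) (q0 : Q) (delta : Q -> A -> Q)
  (LA LB : (nat -> A) -> Prop) : Prop :=
  exists qacc : Q, forall w : nat -> A,
    (LA w -> exists i0, forall i, i0 <= i -> run delta q0 w i = qacc) /\
    (LB w -> forall i, 1 <= i -> run delta q0 w i <> qacc).

(* A game graph with nodes [n] and priorities [d]: an edge relation E in
   which every node has an outgoing edge, and a labelling pi of edges
   (only its values on edges of E are relevant). *)
Definition game_graph (n d : nat) (E : rel 'I_n) (pi : 'I_n -> 'I_n -> 'I_d)
  : Prop := forall u : 'I_n, exists v, E u v.

Definition cycle_max (n d : nat) (pi : 'I_n -> 'I_n -> 'I_d)
  (k : nat) (v : nat -> 'I_n) : nat :=
  \max_(i < k) prio (pi (v i) (v (i.+1 %% k))).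

Definition is_cycle (n : nat) (E : rel 'I_n) (k : nat) (v : nat -> 'I_n)
  : Prop := forall i, i < k -> E (v i) (v (i.+1 %% k)).

Definition even_graph (n d : nat) (E : rel 'I_n) (pi : 'I_n -> 'I_n -> 'I_d)
  : Prop := forall k (v : nat -> 'I_n), 1 <= k -> is_cycle E k v ->
    ~~ odd (cycle_max pi k v).

Definition odd_graph (n d : nat) (E : rel 'I_n) (pi : 'I_n -> 'I_n -> 'I_d)
  : Prop := forall k (v : nat -> 'I_n), 1 <= k -> is_cycle E k v ->
    odd (cycle_max pi k v).

Definition word_in_graph (n d : nat) (E : rel 'I_n) (pi : 'I_n -> 'I_n -> 'I_d)
  (w : nat -> Sigma n d) : Prop :=
  forall i, E (w i).1 (w i.+1).1 /\ pi (w i).1 (w i.+1).1 = (w i).2.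

Definition EvenCycles (n d : nat) (w : nat -> Sigma n d) : Prop :=
  exists (E : rel 'I_n) (pi : 'I_n -> 'I_n -> 'I_d),
    game_graph E pi /\ even_graph E pi /\ word_in_graph E pi w.

Definition OddCycles (n d : nat) (w : nat -> Sigma n d) : Prop :=
  exists (E : rel 'I_n) (pi : 'I_n -> 'I_n -> 'I_d),
    game_graph E pi /\ odd_graph E pi /\ word_in_graph E pi w.

From mathcomp Require Import all_boot.
From mathcomp Require Import zify.

Set Implicit Arguments. Unset Strict Implicit. Unset Printing Implicit Defensive.

(* Let qacc be the accepting state. A word all of whose labels are 2 lies in
   EvenCycles together with every lasso built from it, so a state repeated
   along its run must be qacc. The word climbing through the nodes 1, ..., n
   with labels 2 agrees for n - 1 letters with an odd word (the same climb,
   labelled 1 once it stops), so its states at times 1, ..., n - 1 are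
   distinct and non-accepting. One more non-accepting state x, from which the
   climb stays non-accepting for n steps, is q0 if q0 <> qacc and otherwise
   the state reached on the odd letter (1, 1). Either x is new, or it already
   occurs on the climb and restarting the climb there gives n distinct
   non-accepting states on a single word with labels 2. *)

Section Runs.
Variables (Q A : Type) (delta : Q -> A -> Q).

Lemma eq_run q (w w' : nat -> A) i :
  (forall k, k < i -> w k = w' k) -> run delta q w i = run delta q w' i.
Proof.
elim: i => [//|i IHi] eq_w /=.
by rewrite IHi ?eq_w // => k lt_ki; rewrite eq_w // ltnW.
Qed.

Lemma run_add q (w : nat -> A) i j :
  run delta q w (i + j) = run delta (run delta q w i) (fun k => w (i + k)) j.
Proof. by elim: j => [|j IHj]; rewrite ?addn0 // addnS /= IHj. Qed.

End Runs.

Definition splice (A : Type) (u : nat -> A) (p : nat) (v : nat -> A) (k : nat) : A :=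
  if k < p then u k else v (k - p).

Lemma run_splice (Q A : Type) (delta : Q -> A -> Q) q (u v : nat -> A) p r :
  run delta q (splice u p v) (p + r) = run delta (run delta q u p) v r.
Proof.
rewrite run_add; have -> : run delta q (splice u p v) p = run delta q u p.
  by apply: eq_run => k lt_kp; rewrite /splice lt_kp.
by apply: eq_run => k _; rewrite /splice ltnNge leq_addr addKn.
Qed.

Definition lasso (A : Type) (w : nat -> A) (a p k : nat) : A :=
  w (if k < a then k else a + (k - a) %% p).

Lemma run_lasso (Q A : Type) (delta : Q -> A -> Q) q (w : nat -> A) a p :
  run delta q w a = run delta q w (a + p) ->
  forall m, run delta q (lasso w a p) (a + m * p) = run delta q w a.
Proof.
move=> loop_w; elim=> [|m IHm].
  by rewrite addn0; apply: eq_run => k lt_ka; rewrite /lasso lt_ka.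
rewrite mulSnr addnA run_add IHm [RHS]loop_w run_add; apply: eq_run => k lt_kp.
by rewrite /lasso ltnNge -addnA leq_addr addKn modnMDl modn_small.
Qed.

Section GameGraphs.
Variables n d : nat.

Lemma cycle_max_const (pi : 'I_n -> 'I_n -> 'I_d) k v c : 0 < k ->
  (forall i, i < k -> prio (pi (v i) (v (i.+1 %% k))) = c) -> cycle_max pi k v = c.
Proof.
move=> k_gt0 pi_c; apply/eqP; rewrite eqn_leq; apply/andP; split.
  by apply/bigmax_leqP => i _; rewrite pi_c.
by rewrite -(pi_c 0 k_gt0) /cycle_max; exact: (leq_bigmax (Ordinal k_gt0)).
Qed.

Lemma const_label_even (l : 'I_d) (w : nat -> Sigma n d) :
  ~~ odd (prio l) -> (forall i, (w i).2 = l) -> EvenCycles w.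
Proof.
move=> even_l w_l; exists (fun _ _ => true), (fun _ _ => l); split; last split.
- by move=> u; exists u.
- by move=> k v k_gt0 _; rewrite (@cycle_max_const _ _ _ (prio l)).
- by move=> i; rewrite w_l.
Qed.

Lemma monotone_cycle_const (E : rel 'I_n) k v :
  (forall u u', E u u' -> u <= u') -> is_cycle E k v ->
  forall i, i < k -> v i = v (i.+1 %% k).
Proof.
move=> E_mono cyc i lt_ik; have k_gt0 : 0 < k by apply: leq_ltn_trans lt_ik.
have cyc_le j : v (j %% k) <= v (j.+1 %% k).
  by have := E_mono _ _ (cyc _ (ltn_pmod j k_gt0)); rewrite -addn1 modnDml addn1.
have ge_v j l : v (j %% k) <= v ((j + l) %% k).
  by elim: l => [|l IHl]; rewrite ?addn0 // (leq_trans IHl) // addnS.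
apply/val_inj/eqP; rewrite eqn_leq -{1 4}(modn_small lt_ik) cyc_le /=.
by have := ge_v i.+1 k.-1; rewrite addSnnS prednK // modnDr.
Qed.

Definition mono_word (lo hi : 'I_d) (c : nat -> 'I_n) (i : nat) : Sigma n d :=
  (c i, if c i < c i.+1 then hi else lo).

Lemma mono_word_odd (lo hi : 'I_d) (c : nat -> 'I_n) :
  odd (prio lo) -> (forall i, c i <= c i.+1) -> OddCycles (mono_word lo hi c).
Proof.
move=> odd_lo c_mono.
exists (fun u u' : 'I_n => u <= u'), (fun u u' => if u < u' then hi else lo).
split; last split.
- by move=> u; exists u.
- move=> k v k_gt0 cyc; rewrite (@cycle_max_const _ _ _ (prio lo)) // => i lt_ik.
  by rewrite -(monotone_cycle_const _ cyc lt_ik) // ltnn.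
- by move=> i; split; rewrite ?c_mono.
Qed.

End GameGraphs.

Definition label1 : 'I_2 := ord0.
Definition label2 : 'I_2 := ord_max.

Section Separation.
Variables (n : nat) (Q : finType) (q0 qacc : Q) (delta : Q -> Sigma n 2 -> Q).
Hypothesis even_accepted : forall w, EvenCycles w ->
  exists i0, forall i, i0 <= i -> run delta q0 w i = qacc.

Lemma lasso_accepting (w : nat -> Sigma n 2) a b :
  (forall i, (w i).2 = label2) -> a < b ->
  run delta q0 w a = run delta q0 w b -> run delta q0 w a = qacc.
Proof.
move=> w_label2 lt_ab loop_w; set p := b - a.
have p_gt0 : 0 < p by rewrite subn_gt0.
have {}loop_w : run delta q0 w a = run delta q0 w (a + p) by rewrite subnKC // ltnW.
have [i0 accept] := even_accepted (@const_label_even _ _ label2 (lasso w a p) erefl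
  (fun k => w_label2 _)).
rewrite -(run_lasso loop_w i0); apply: accept.
exact: leq_trans (leq_pmulr _ p_gt0) (leq_addl _ _).
Qed.

Lemma nonaccepting_window_uniq (w : nat -> Sigma n 2) p N :
  (forall i, (w i).2 = label2) ->
  (forall k, k < N -> run delta q0 w (p + k) != qacc) ->
  uniq (qacc :: mkseq (fun k => run delta q0 w (p + k)) N).
Proof.
move=> w_label2 nonacc /=; apply/andP; split.
  by apply/negP => /mapP [k]; rewrite mem_iota add0n => /nonacc/eqP nacc /esym.
apply/(mkseq_uniqP _ _) => i j; rewrite !inE => lt_iN lt_jN eq_ij.
wlog lt_ij : i j lt_iN lt_jN eq_ij / i < j.
  move=> wlog_ij; case: (ltngtP i j) => [||//] ?; first exact: wlog_ij.
  by apply/esym/wlog_ij.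
have := lasso_accepting w_label2 _ eq_ij; rewrite ltn_add2l => /(_ lt_ij) acc.
by move/eqP: (nonacc i lt_iN).
Qed.

Lemma card_nonaccepting_runs (w : nat -> Sigma n 2) N (x : Q) :
  (forall i, (w i).2 = label2) ->
  (forall k, k < N -> run delta q0 w (1 + k) != qacc) ->
  (forall r, r <= N -> run delta x w r != qacc) ->
  N.+2 <= #|Q|.
Proof.
move=> w_label2 w_nonacc x_nonacc.
have size_le_card (s : seq Q) : uniq s -> size s <= #|Q|.
  by move/card_uniqP <-; apply: max_card.
set S := mkseq (fun k => run delta q0 w (1 + k)) N.
have uniq_S : uniq (qacc :: S) by apply: nonaccepting_window_uniq.
have [/mapP [k _ x_eq] | x_notin_S] := boolP (x \in S); last first.
  have uniq_xS : uniq (x :: qacc :: S).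
    by rewrite /= inE negb_or (x_nonacc 0) ?x_notin_S.
  by have := size_le_card _ uniq_xS; rewrite /= size_mkseq.
rewrite {}x_eq in x_nonacc.
have splice_label2 i : (splice w (1 + k) w i).2 = label2 by rewrite /splice; case: ifP.
set T := mkseq (fun r => run delta q0 (splice w (1 + k) w) (1 + k + r)) N.+1.
have uniq_T : uniq (qacc :: T).
  by apply: nonaccepting_window_uniq => // r lt_rN; rewrite run_splice; apply: x_nonacc.
by have := size_le_card _ uniq_T; rewrite /T /= size_map size_iota.
Qed.

End Separation.

Theorem proposition5 (n : nat) (Hn : 0 < n) (Q : finType) (q0 : Q)
  (delta : Q -> Sigma n 2 -> Q) :
  separates q0 delta (@EvenCycles n 2) (@OddCycles n 2) ->
  n.+1 <= #|Q|.
Proof.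
case: n Hn delta => [//|m] _ delta [qacc separ].
have rejected w r : OddCycles w -> 0 < r -> run delta q0 w r != qacc.
  by move=> odd_w r_gt0; apply/eqP/(separ w).2.
pose climb j : 'I_m.+1 := inord (minn j m).
have climbK j : climb j = minn j m :> nat by rewrite inordK // ltnS geq_minr.
pose even_climb j := (climb j, label2).
pose odd_climb := mono_word label1 label2 climb.
pose odd_climb' :=
  mono_word label1 label2 (fun j => if j is j'.+1 then climb j' else ord0).
have odd_climb_odd : OddCycles odd_climb.
  by apply: mono_word_odd => // j; rewrite !climbK; lia.
have odd_climb'_odd : OddCycles odd_climb'.
  by apply: mono_word_odd => // -[|j] //; rewrite !climbK; lia.
have run_even_climb q r : r <= m -> run delta q even_climb r = run delta q odd_climb r.
  move=> le_rm; apply: eq_run => j lt_jr.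
  by rewrite /odd_climb /mono_word !climbK ifT //; lia.
apply: (card_nonaccepting_runs (fun w => (separ w).1) (w := even_climb)
    (x := if q0 == qacc then run delta q0 odd_climb' 1 else q0)) => //.
  by move=> k lt_km; rewrite run_even_climb // rejected.
move=> r le_rm.
rewrite run_even_climb //; case: ifP => [_ | /negbT q0_nacc].
  have -> : run delta (run delta q0 odd_climb' 1) odd_climb r =
            run delta q0 odd_climb' (1 + r) by rewrite run_add.
  exact: rejected.
by case: r le_rm => [|r] _; [exact: q0_nacc | exact: rejected].
Qed.
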